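(* Consider the following game with $n$ players partitioned (unknown to the good players) into a set $G$ of $n-f$ good players and a set $B$ of $f=n/(3+\epsilon)$ bad players, for some small $\epsilon>0$, played for up to $T$ iterations. In iteration $t$: the adversary privately picks $\sigma(t)\in\{-1,1\}$; each good player $i\in G$ picks $X_i(t)\in\{-1,1\}$ uniformly at random, independently; the bad players see these values and then choose $X_i(t)\in\{-1,1\}$ for $i\in B$ arbitrarily; if $\mathrm{sgn}(\sum_{i\in[n]}X_i(t))=\sigma(t)$ the game continues to iteration $t+1$, otherwise it ends. Let $T=\tilde{\Theta}((n/\epsilon)^2)$. Then, with high probability, if the game does not end within $T$ iterations, the pair $(i,j)\in[n]^2$ with $i\neq j$ maximizing $\langle X_i,X_j\rangle=\sum_{t=1}^T X_i(t)X_j(t)$ satisfies $B\cap\{i,j\}\neq\emptyset$.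
   Context: $\mathrm{sgn}(x)=1$ if $x\ge 0$ and $-1$ if $x<0$. ''With high probability'' means with probability $1-n^{-\Omega(1)}$ (arbitrarily large polynomial). *)

From HB Require Import structures.
From mathcomp Require Import all_boot all_order all_algebra.
From mathcomp Require Import reals exp.
Set Implicit Arguments. Unset Strict Implicit. Unset Printing Implicit Defensive.
Import Order.TTheory GRing.Theory Num.Theory.
Local Open Scope ring_scope.

(* A round: one bit per player, [true] = +1, [false] = -1. *)
Definition row (n : nat) := {ffun 'I_n -> bool}.

Definition val (b : bool) : int := if b then 1 else -1.

(* Deterministic adaptive adversary (randomized ones are mixtures of these;
   moreover the adversary also sees the (irrelevant) fresh coins at the
   bad coordinates, which serve as private randomness).
   - [sig_s h]   : sigma(t) (true = +1), chosen from the past history h only;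
   - [bad_s h c] : the row of bad-player choices, chosen after seeing the
                   history h and the current coin row c (containing the
                   good players' values X_i(t)). *)
Record strategy (n : nat) := Strategy {
  sig_s : seq (row n) -> bool ;
  bad_s : seq (row n) -> row n -> row n }.

(* The coins: the good players' uniform independent bits, for T rounds. *)
Definition coins (n T : nat) := {ffun 'I_T -> row n}.

Definition coin (n T : nat) (w : coins n T) (k : nat) : row n :=
  if insub k is Some j then w j else [ffun => false].

Definition play_row (n : nat) (B : {set 'I_n}) (S : strategy n)
  (h : seq (row n)) (c : row n) : row n :=
  [ffun i => if i \in B then bad_s S h c i else c i].

Fixpoint hist (n T : nat) (B : {set 'I_n}) (S : strategy n) (w : coins n T)
  (k : nat) : seq (row n) :=
  match k with
  | 0 => [::]
  | k'.+1 => let h := hist B S w k' in rcons h (play_row B S h (coin w k'))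
  end.

(* sgn(sum_i X_i(t)) = sigma(t), with sgn(0) = 1. *)
Definition continues (n : nat) (x : row n) (s : bool) : bool :=
  ((0 <= \sum_i val (x i)) == s).

Definition survives (n T : nat) (B : {set 'I_n}) (S : strategy n)
  (w : coins n T) : bool :=
  [forall t : 'I_T,
     let h := hist B S w t in continues (play_row B S h (coin w t)) (sig_s S h)].

Definition ip (n : nat) (X : seq (row n)) (i j : 'I_n) : int :=
  \sum_(x <- X) val (x i) * val (x j).

Definition maximizing_pair (n : nat) (X : seq (row n)) (i j : 'I_n) : bool :=
  (i != j) && [forall k, forall l, (k != l) ==> (ip X k l <= ip X i j)].

Definition bad_event (n T : nat) (B : {set 'I_n}) (S : strategy n)
  (w : coins n T) : bool :=
  survives B S w &&
  [exists i, exists j,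
     [&& maximizing_pair (hist B S w T) i j, i \notin B & j \notin B]].

Definition prob (R : realType) (Om : finType) (E : pred Om) : R :=
  (#|E|%:R / #|Om|%:R).

(* Markov's inequality for an exponential potential.  Let f = |B|, m = n - f =
   (2 + eps) f and A = eps T / (4 f).  If a maximizing pair {i, j} is good, then
   either <X_i, X_j> >= A, a large deviation for the products of two players'
   fresh coins, or every pair has correlation below A, and then the bad row
   sums b_t satisfy sum_t b_t^2 = sum_{i,j in B} <X_i, X_j> <= f (T + f A).
   Survival of round t forces b_t^2 >= g_t^2 whenever the good row sum g_t has
   the sign opposite to sigma(t); as sigma(t) is chosen before the coins, this
   deficit has conditional mean m / 2, so its sum over T rounds is about
   (1 + eps / 2) f T, well above f (T + f A) = (1 + eps / 4) f T.  Both
   deviations have probability exp (- eps^2 T / (1024 n^2)) <= n^-(c+3), and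
   a union bound over the n^2 pairs concludes. *)

From Pilot Require Import Defs.
From HB Require Import structures.
From mathcomp Require Import all_boot all_order all_algebra.
From mathcomp Require Import reals exp sequences.
From mathcomp Require Import ring lra.
Set Implicit Arguments. Unset Strict Implicit. Unset Printing Implicit Defensive.
Import Order.TTheory GRing.Theory Num.Theory.
Local Open Scope ring_scope.
Local Notation row := Defs.row.

Definition spin (R : pzRingType) (b : bool) : R := if b then 1 else -1.

Lemma spin_val (R : pzRingType) b : (Defs.val b)%:~R = spin R b.
Proof. by case: b. Qed.

Lemma spin_negb (R : pzRingType) b : spin R (~~ b) = - spin R b.
Proof. by case: b; rewrite /= ?opprK. Qed.

Lemma spinM_self (R : pzRingType) b : spin R b * spin R b = 1.
Proof. by case: b; rewrite /= ?mulrNN mulr1. Qed.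

Lemma normr_spin (R : numDomainType) b : `|spin R b| = 1.
Proof. by case: b; rewrite /= ?normrN normr1. Qed.

Section Flip.
Variable n : nat.

Definition flip (A : {set 'I_n}) (c : row n) : row n :=
  [ffun k => if k \in A then ~~ c k else c k].

Lemma flipK A : involutive (flip A).
Proof. by move=> c; apply/ffunP => k; rewrite !ffunE; case: (k \in A); rewrite ?negbK. Qed.

Lemma sum_flip (V : nmodType) A (F : row n -> V) :
  \sum_(c : row n) F c = \sum_(c : row n) F (flip A c).
Proof. exact: (reindex_inj (inv_inj (@flipK A))). Qed.

Lemma sum_spinM (R : numDomainType) i j :
  \sum_(c : row n) spin R (c i) * spin R (c j) = (i == j)%:R * #|{: row n}|%:R.
Proof.
case: eqP => [<-|/eqP ij].
  by under eq_bigr do rewrite spinM_self; rewrite sumr_const mul1r.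
rewrite mul0r; apply/eqP; rewrite -[_ == 0](@mulrn_eq0 _ _ 2) // mulr2n.
rewrite {1}(sum_flip [set i]) -big_split /=; apply/eqP/big1 => c _.
by rewrite !ffunE !inE eqxx eq_sym (negbTE ij) spin_negb mulNr addNr.
Qed.

End Flip.

Section ExpBounds.
Variable R : realType.

Lemma expRN_le_quadratic (x : R) : 0 <= x -> expR (- x) <= 1 - x + x ^+ 2.
Proof.
move=> x0; rewrite expRN.
have x1 : 0 < 1 + x by lra.
apply: (le_trans (y := (1 + x)^-1)).
  by rewrite lef_pV2 ?expR_ge1Dx ?posrE ?expR_gt0.
rewrite -[_^-1]mul1r ler_pdivrMr //.
have : 0 <= x ^+ 3 by rewrite exprn_ge0.
rewrite !exprS expr0; nra.
Qed.

Lemma expR_le_quadratic (x : R) : 0 <= x <= 2^-1 -> expR x <= 1 + x + 2 * x ^+ 2.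
Proof.
move=> /andP [x0 x1].
rewrite -[expR x]invrK -expRN -[_^-1]mul1r ler_pdivrMr ?expR_gt0 //.
have h2 : 0 <= x ^+ 2 * (1 - 2 * x) by rewrite mulr_ge0 ?sqr_ge0 //; lra.
have h3 : 0 <= 1 + x + 2 * x ^+ 2 by rewrite !exprS expr0; nra.
apply: (le_trans (y := (1 + x + 2 * x ^+ 2) * (1 - x))).
  by move: h2; rewrite !exprS expr0; nra.
by rewrite ler_wpM2l // expR_ge1Dx.
Qed.

Lemma expRDexpRN_le (x : R) :
  0 <= x <= 2^-1 -> expR x + expR (- x) <= 2 * expR (2 * x ^+ 2).
Proof.
move=> /[dup] /andP [x0 _] /expR_le_quadratic h1; have h2 := expRN_le_quadratic x0.
have x2 := sqr_ge0 x; apply: (le_trans (y := 2 * (1 + 2 * x ^+ 2))); first lra.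
by rewrite ler_wpM2l // expR_ge1Dx.
Qed.

End ExpBounds.

Lemma sum_expR_spinM (R : realType) n (i j : 'I_n) (lam : R) :
  i != j -> 0 <= lam <= 2^-1 ->
  \sum_(c : row n) expR (lam * (spin R (c i) * spin R (c j))) <=
  #|{: row n}|%:R * expR (2 * lam ^+ 2).
Proof.
move=> ij hlam.
(* Flipping coin [i] negates the product, so the sum is N cosh lam. *)
have pair_sum (c : row n) : expR (lam * (spin R (c i) * spin R (c j))) +
    expR (lam * (spin R (flip [set i] c i) * spin R (flip [set i] c j))) =
    expR lam + expR (- lam).
  rewrite !ffunE !inE eqxx eq_sym (negbTE ij) spin_negb.
  by case: (c i); case: (c j); rewrite /= ?(mulr1, mulrN1, mulN1r, mulrN, opprK) // addrC.
rewrite -(@ler_pM2l _ 2) // mulrCA.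
apply: (le_trans _ (ler_wpM2l (ler0n _ _) (expRDexpRN_le hlam))).
rewrite mulr_natl mulr2n {2}(sum_flip [set i]) -big_split /=.
by under eq_bigr do rewrite pair_sum; rewrite sumr_const mulr_natl.
Qed.

Section AdaptedSums.
Variables (n : nat) (B : {set 'I_n}) (S : strategy n).

Definition extend_coins T (w : coins n T) (c : row n) : coins n T.+1 :=
  [ffun j : 'I_T.+1 => if (j < T)%N then coin w j else c].

Definition restrict_coins T (w : coins n T.+1) : coins n T :=
  [ffun j : 'I_T => w (widen_ord (leqnSn T) j)].

Lemma coin_extend T w c k : (k < T)%N -> coin (@extend_coins T w c) k = coin w k.
Proof.
move=> kT; rewrite /coin; case: insubP => [j _ jk|]; last by rewrite (ltn_trans kT).
by rewrite ffunE jk kT.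
Qed.

Lemma coin_extend_last T w c : coin (@extend_coins T w c) T = c.
Proof.
rewrite /coin; case: insubP => [j _ jk|]; last by rewrite ltnSn.
by rewrite ffunE jk ltnn.
Qed.

Lemma hist_extend T w c k :
  (k <= T)%N -> hist B S (@extend_coins T w c) k = hist B S w k.
Proof. by elim: k => [//|k IH] kT /=; rewrite IH ?(ltnW kT) // coin_extend. Qed.

Lemma sum_coinsS (V : nmodType) T (F : coins n T.+1 -> V) :
  \sum_(w : coins n T.+1) F w =
  \sum_(w : coins n T) \sum_(c : row n) F (extend_coins w c).
Proof.
rewrite pair_big /= (reindex (fun p : coins n T * row n => extend_coins p.1 p.2)) //.
exists (fun w => (restrict_coins w, w ord_max)).
- move=> [w c] _ /=; congr pair; last by rewrite ffunE /= ltnn.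
  apply/ffunP => j; rewrite !ffunE /= ltn_ord /coin.
  by case: insubP => [j' _ jj|]; rewrite ?ltn_ord //; congr (w _); apply: val_inj.
- move=> w _; apply/ffunP => j; rewrite ffunE.
  case: ifP => jT.
    rewrite /coin; case: insubP => [j' _ jj|]; rewrite ?jT // ffunE.
    by congr (w _); apply: val_inj.
  congr (w _); apply: val_inj => /=.
  by move: (ltn_ord j) jT; rewrite ltnS leq_eqVlt => /orP [/eqP|->].
Qed.

(* Peel off the last round: its coins are uniform whatever the history. *)
Lemma sum_expR_adapted_le (R : realType) (phi : seq (row n) -> row n -> R) (b : R) :
  (forall h, \sum_(c : row n) expR (phi h c) <= #|{: row n}|%:R * expR b) ->
  forall T, \sum_(w : coins n T) expR (\sum_(t < T) phi (hist B S w t) (coin w t))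
    <= #|{: row n}|%:R ^+ T * expR (T%:R * b).
Proof.
move=> hb; elim=> [|T IH].
  under eq_bigr do rewrite big_ord0 expR0.
  by rewrite sumr_const card_ffun card_ord mul0r expR0 !mulr1.
have step (w : coins n T) : \sum_(c : row n)
    expR (\sum_(t < T.+1) phi (hist B S (extend_coins w c) t) (coin (extend_coins w c) t))
  = expR (\sum_(t < T) phi (hist B S w t) (coin w t)) *
    \sum_(c : row n) expR (phi (hist B S w T) c).
  rewrite mulr_sumr; apply: eq_bigr => c _.
  rewrite big_ord_recr /= expRD hist_extend // coin_extend_last; congr (expR _ * _).
  by apply: eq_bigr => t _; rewrite hist_extend ?coin_extend // ltnW.
rewrite sum_coinsS; under eq_bigr do rewrite step.
apply: (le_trans (ler_sum _ (fun w _ => ler_wpM2l (expR_ge0 _) (hb _)))).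
rewrite -mulr_suml; apply: (le_trans (ler_wpM2r _ IH)).
  by rewrite mulr_ge0 ?expR_ge0.
by rewrite exprSr -natr1 mulrDl mul1r expRD mulrACA.
Qed.

End AdaptedSums.

Section Deficit.
Variables (R : realType) (n : nat) (B : {set 'I_n}).
Local Notation N := (#|{: row n}|%:R : R).
Local Notation m := (#|~: B|%:R : R).

Definition good_sum (c : row n) : R := \sum_(i in ~: B) spin R (c i).

(* [(good_sum c < 0) == s] says that sgn (good_sum c), with sgn 0 = 1, is
   opposite to [s] (where [true] stands for +1). *)
Definition deficit (s : bool) (c : row n) : R :=
  if (good_sum c < 0) == s then good_sum c ^+ 2 else 0.

Lemma good_sum_flip c : good_sum (flip (~: B) c) = - good_sum c.
Proof. by rewrite /good_sum -sumrN; apply: eq_bigr => i iB; rewrite ffunE iB spin_negb. Qed.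

Lemma normr_good_sum c : `|good_sum c| <= n%:R.
Proof.
apply: (le_trans (ler_norm_sum _ _ _)).
under eq_bigr do rewrite normr_spin.
by rewrite sumr_const ler_nat (leq_trans (max_card _)) ?card_ord.
Qed.

Lemma sum_good_sum_sq : \sum_(c : row n) good_sum c ^+ 2 = m * N.
Proof.
under eq_bigr do rewrite expr2 /good_sum mulr_suml.
under eq_bigr => c _ do under eq_bigr => i _ do rewrite mulr_sumr.
rewrite exchange_big /=.
under eq_bigr => i _ do rewrite exchange_big /=.
under eq_bigr => i _ do under eq_bigr => j _ do rewrite sum_spinM.
transitivity (\sum_(i in ~: B) N); last by rewrite sumr_const mulr_natl.
apply: eq_bigr => i iB.
rewrite (bigD1 i) //= eqxx mul1r big1 ?addr0 // => j /andP [_ ji].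
by rewrite eq_sym (negbTE ji) mul0r.
Qed.

Lemma sum_deficit s : \sum_(c : row n) deficit s c = m * N / 2.
Proof.
pose pos c := if 0 < good_sum c then good_sum c ^+ 2 else 0.
have neg_pos : \sum_(c : row n) (if good_sum c < 0 then good_sum c ^+ 2 else 0) =
               \sum_(c : row n) pos c.
  by rewrite (sum_flip (~: B)); apply: eq_bigr => c _; rewrite good_sum_flip oppr_lt0 sqrrN.
have -> : \sum_(c : row n) deficit s c = \sum_(c : row n) pos c.
  case: s; first by rewrite -neg_pos; apply: eq_bigr => c _; rewrite /deficit eqb_id.
  apply: eq_bigr => c _; rewrite /deficit /pos eqbF_neg -leNgt.
  by case: ltrgt0P => // ->; rewrite expr0n.
have : m * N = 2 * \sum_(c : row n) pos c.
  rewrite -sum_good_sum_sq mulr_natl mulr2n -{1}neg_pos -big_split /=.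
  apply: eq_bigr => c _; rewrite /pos.
  by case: ltrgt0P => [h|h|->]; rewrite ?addr0 ?add0r // expr0n.
by move=> ->; rewrite mulrC mulKf ?pnatr_eq0.
Qed.

Lemma deficit_ge0 s c : 0 <= deficit s c.
Proof. by rewrite /deficit; case: ifP => _; rewrite ?sqr_ge0. Qed.

Lemma deficit_le s c : deficit s c <= n%:R ^+ 2.
Proof.
rewrite /deficit; case: ifP => _; last exact: exprn_ge0.
by rewrite -real_normK ?num_real // lerXn2r ?nnegrE ?normr_good_sum.
Qed.

Lemma sum_expR_deficit_le (lam : R) s : 0 <= lam ->
  \sum_(c : row n) expR (- (lam * deficit s c)) <=
  N * expR (- (lam * (m / 2)) + lam ^+ 2 * n%:R ^+ 4).
Proof.
move=> lam0.
have quad c : expR (- (lam * deficit s c)) <= 1 - lam * deficit s c + lam ^+ 2 * n%:R ^+ 4.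
  apply: (le_trans (expRN_le_quadratic (mulr_ge0 lam0 (deficit_ge0 s c)))).
  rewrite lerD2l exprMn ler_wpM2l ?sqr_ge0 // (exprM _ 2 2).
  by rewrite lerXn2r ?nnegrE ?deficit_ge0 ?exprn_ge0 ?deficit_le.
apply: (le_trans (ler_sum _ (fun c _ => quad c))).
apply: (le_trans _ (ler_wpM2l (ler0n _ _) (expR_ge1Dx _))).
rewrite !big_split /= sumrN -mulr_sumr sum_deficit !sumr_const.
by rewrite le_eqVlt; apply/predU1P; left; ring.
Qed.

End Deficit.

Section Game.
Variables (R : realType) (n : nat) (B : {set 'I_n}) (S : strategy n).
Local Notation f := (#|B|%:R : R).

Definition ipR (X : seq (row n)) i j : R := \sum_(x <- X) spin R (x i) * spin R (x j).

Definition bad_sum (x : row n) : R := \sum_(i in B) spin R (x i).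

Lemma intr_ip X i j : (ip X i j)%:~R = ipR X i j.
Proof.
rewrite /ip /ipR; elim: X => [|x X IH]; first by rewrite !big_nil.
by rewrite !big_cons intrD intrM !spin_val IH.
Qed.

Lemma ipR_diag X i : ipR X i i = (size X)%:R.
Proof.
rewrite /ipR; elim: X => [|x X IH]; first by rewrite big_nil.
by rewrite big_cons IH spinM_self -nat1r.
Qed.

Lemma size_hist T (w : coins n T) k : size (hist B S w k) = k.
Proof. by elim: k => [//|k IH] /=; rewrite size_rcons IH. Qed.

Lemma big_hist (V : nmodType) T (w : coins n T) (F : row n -> V) k :
  \sum_(x <- hist B S w k) F x =
  \sum_(t < k) F (play_row B S (hist B S w t) (coin w t)).
Proof.
elim: k => [|k IH]; first by rewrite big_nil big_ord0.
by rewrite /= big_rcons /= IH big_ord_recr.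
Qed.

Lemma play_row_good h c i : i \notin B -> play_row B S h c i = c i.
Proof. by move=> iB; rewrite ffunE (negbTE iB). Qed.

Lemma sum_play_row h c :
  (\sum_i Defs.val (play_row B S h c i))%:~R = bad_sum (play_row B S h c) + good_sum R B c.
Proof.
rewrite (big_morph (fun z : int => z%:~R : R) (@intrD R) (erefl _)) (bigID (mem B)) /=.
congr (_ + _); first by apply: eq_bigr => i _; rewrite spin_val.
apply: eq_big => [i|i iB]; first by rewrite inE.
by rewrite spin_val play_row_good.
Qed.

Lemma deficit_le_continues h c s : continues (play_row B S h c) s ->
  deficit R B s c <= bad_sum (play_row B S h c) ^+ 2.
Proof.
rewrite /continues -(@ler0z R) sum_play_row /deficit.
set b := bad_sum _; set g := good_sum R B c => /eqP <-.
case: ifP => [|_]; last exact: sqr_ge0.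
have -> : b ^+ 2 = g ^+ 2 + (b - g) * (b + g) by ring.
rewrite lerDl; case: (lerP 0 (b + g)) => bg0; rewrite ?eqb_id ?eqbF_neg -?leNgt => hg.
- by rewrite mulr_ge0 //; lra.
- by rewrite mulr_le0 //; lra.
Qed.

Lemma survives_sum_deficit_le T (w : coins n T) : survives B S w ->
  \sum_(t < T) deficit R B (sig_s S (hist B S w t)) (coin w t) <=
  \sum_(x <- hist B S w T) bad_sum x ^+ 2.
Proof.
by move=> /forallP sv; rewrite big_hist; apply: ler_sum => t _; apply: deficit_le_continues.
Qed.

Lemma sum_bad_sum_sq X :
  \sum_(x <- X) bad_sum x ^+ 2 = \sum_(i in B) \sum_(j in B) ipR X i j.
Proof.
rewrite /ipR; under eq_bigr do rewrite expr2 /bad_sum mulr_suml.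
under eq_bigr => x _ do under eq_bigr => i _ do rewrite mulr_sumr.
by rewrite exchange_big /=; apply: eq_bigr => i _; rewrite exchange_big.
Qed.

Lemma sum_bad_sum_sq_le X (A : R) : 0 <= A -> (forall k l, k != l -> ipR X k l <= A) ->
  \sum_(x <- X) bad_sum x ^+ 2 <= f * ((size X)%:R + f * A).
Proof.
move=> A0 hA; rewrite sum_bad_sum_sq.
have sum_constB (a : R) : \sum_(j in B) a = f * a by rewrite sumr_const mulr_natl.
rewrite -sum_constB; apply: ler_sum => i iB.
rewrite (bigD1 i) //= ipR_diag lerD2l -sum_constB [X in _ <= X](bigD1 i) //=.
by apply: ler_wpDl A0 _; apply: ler_sum => j /andP [_ ji]; apply: hA; rewrite eq_sym.
Qed.

End Game.

Lemma bad_fraction_bounds (R : realType) (eps f nr : R) :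
  0 < eps <= 1 -> 4 <= nr -> (3 + eps) * f = nr -> 1 <= f /\ nr <= 4 * f.
Proof.
move=> /andP [eps0 eps1] nr4 hf.
have f0 : 0 < f by rewrite -(@pmulr_rgt0 _ (3 + eps)) ?hf; lra.
split; nra.
Qed.

(* The parameters are tuned so that both exponents of [sum_potential_le] are
   at most [- decay], and the lower bound on [T] gives [decay >= (c + 3) ln n]. *)
Section Tuning.
Variables (R : realType) (eps f nr Tr : R).

Definition corr_threshold : R := eps * Tr / (4 * f).
Definition lam_pair : R := eps / (16 * f).
Definition lam_deficit : R := eps * f / (8 * nr ^+ 4).
Definition decay : R := eps ^+ 2 * Tr / (1024 * nr ^+ 2).

Lemma corr_threshold_ge0 : 0 < eps -> 0 < f -> 0 <= Tr -> 0 <= corr_threshold.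
Proof. by move=> eps0 f0 Tr0; rewrite divr_ge0 ?mulr_ge0 //; lra. Qed.

Lemma lam_pair_bounds : 0 < eps <= 1 -> 1 <= f -> 0 <= lam_pair <= 2^-1.
Proof. by move=> /andP [eps0 eps1] f1; rewrite divr_ge0 /= ?ler_pdivrMr; lra. Qed.

Lemma lam_deficit_ge0 : 0 < eps -> 0 <= f -> 0 <= lam_deficit.
Proof.
by move=> eps0 f0; rewrite divr_ge0 ?(mulr_ge0 (ltW eps0) f0) // mulr_ge0 // exprn_even_ge0.
Qed.

Lemma pair_exponent_le : 0 < f <= nr -> 0 <= Tr ->
  Tr * (2 * lam_pair ^+ 2) - lam_pair * corr_threshold <= - decay.
Proof.
move=> /andP [f0 fnr] Tr0.
have -> : Tr * (2 * lam_pair ^+ 2) - lam_pair * corr_threshold =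
          - (eps ^+ 2 * Tr / (128 * f ^+ 2)).
  by rewrite /lam_pair /corr_threshold; field; lra.
rewrite lerN2 ler_wpM2l ?(mulr_ge0 (sqr_ge0 eps) Tr0) //.
rewrite lef_pV2 ?posrE ?mulr_gt0 ?exprn_gt0 //; try lra.
by rewrite !expr2; nra.
Qed.

Lemma deficit_exponent_le m : 0 < f -> 0 < nr <= 4 * f -> m = (2 + eps) * f -> 0 <= Tr ->
  lam_deficit * (f * (Tr + f * corr_threshold)) +
  Tr * (- (lam_deficit * (m / 2)) + lam_deficit ^+ 2 * nr ^+ 4) <= - decay.
Proof.
move=> f0 /andP [nr0 nr4f] -> Tr0.
have -> : lam_deficit * (f * (Tr + f * corr_threshold)) +
    Tr * (- (lam_deficit * ((2 + eps) * f / 2)) + lam_deficit ^+ 2 * nr ^+ 4) =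
    - (eps ^+ 2 * Tr * (16 * f ^+ 2) / (1024 * nr ^+ 4)).
  by rewrite /lam_deficit /corr_threshold; field; rewrite ?expf_neq0; lra.
have -> : decay = eps ^+ 2 * Tr * nr ^+ 2 / (1024 * nr ^+ 4).
  by rewrite /decay; field; lra.
rewrite lerN2 ler_wpM2r ?invr_ge0 ?mulr_ge0 ?exprn_ge0 //; try lra.
by rewrite ler_wpM2l ?(mulr_ge0 (sqr_ge0 eps) Tr0) // !expr2; nra.
Qed.

Lemma decay_ge (c : nat) : 0 < eps <= 1 -> 1 <= nr ->
  1024 * (c + 3)%:R * (nr / eps) ^+ 2 * ln (nr / eps) <= Tr ->
  (c + 3)%:R * ln nr <= decay.
Proof.
move=> /andP [eps0 eps1] nr1 hTr.
have nr_eps : nr <= nr / eps by rewrite ler_pdivlMr //; nra.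
apply: (le_trans (y := (c + 3)%:R * ln (nr / eps))).
  by rewrite ler_wpM2l // ler_ln ?posrE ?divr_gt0 //; lra.
have -> : (c + 3)%:R * ln (nr / eps) =
    eps ^+ 2 * (1024 * (c + 3)%:R * (nr / eps) ^+ 2 * ln (nr / eps)) / (1024 * nr ^+ 2).
  by field; rewrite ?expf_neq0; lra.
by rewrite ler_wpM2r ?invr_ge0 ?mulr_ge0 ?exprn_ge0 ?ler_wpM2l ?sqr_ge0 //; lra.
Qed.

End Tuning.

Lemma expRN_ln_le (R : realType) (c : nat) (x Q : R) :
  2 <= x -> (c + 3)%:R * ln x <= Q -> expR (- Q) * (1 + x ^+ 2) <= (x ^+ c)^-1.
Proof.
move=> x2 hQ.
have x0 : 0 < x by lra.
have : expR (- Q) <= (x ^+ (c + 3))^-1.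
  have xpos : x ^+ (c + 3) \is Num.pos by rewrite posrE exprn_gt0.
  by rewrite -(lnK xpos) -expRN ler_expR lerN2 lnXn // -mulr_natl.
rewrite exprD invfM => /ler_wpM2r h; apply: le_trans (h _ _) _.
  by rewrite addr_ge0 ?sqr_ge0.
rewrite -mulrA ler_piMr ?invr_ge0 ?exprn_ge0 ?(ltW x0) //.
rewrite mulrC ler_pdivrMr ?exprn_gt0 // mul1r !exprS expr0 !mulr1.
by nra.
Qed.

Lemma prob_le_mean (R : realType) (Om : finType) (E : pred Om) (F : Om -> R) :
  (forall w, 0 <= F w) -> (forall w, E w -> 1 <= F w) ->
  prob R E <= (\sum_w F w) / #|Om|%:R.
Proof.
move=> F0 FE; rewrite /prob ler_wpM2r ?invr_ge0 //.
rewrite -[#|E|]sum1_card natr_sum big_mkcond /=; apply: ler_sum => w _.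
by case: ifP => [/FE|_].
Qed.

Section Potential.
Variables (R : realType) (n : nat) (B : {set 'I_n}) (S : strategy n) (T : nat).
Variables (lam1 lam2 A : R).
Local Notation f := (#|B|%:R : R).
Local Notation N := (#|{: row n}|%:R : R).

Definition pair_potential (w : coins n T) (i j : 'I_n) : R :=
  expR (\sum_(t < T) lam1 * (spin R (coin w t i) * spin R (coin w t j)) - lam1 * A).

Definition deficit_potential (w : coins n T) : R :=
  expR (lam2 * (f * (T%:R + f * A)) -
        \sum_(t < T) lam2 * deficit R B (sig_s S (hist B S w t)) (coin w t)).

Definition potential (w : coins n T) : R :=
  deficit_potential w + \sum_i \sum_(j | j != i) pair_potential w i j.

Lemma pair_potentials_ge0 w : 0 <= \sum_i \sum_(j | j != i) pair_potential w i j.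
Proof. by apply/sumr_ge0 => i _; apply/sumr_ge0 => j _; exact: expR_ge0. Qed.

Lemma potential_ge0 w : 0 <= potential w.
Proof. by rewrite addr_ge0 ?expR_ge0 ?pair_potentials_ge0. Qed.

Lemma bad_event_potential_ge1 w : 0 <= lam1 -> 0 <= lam2 -> 0 <= A ->
  bad_event B S w -> 1 <= potential w.
Proof.
move=> lam1_ge0 lam2_ge0 A0.
move=> /andP [surv /existsP [i /existsP [j /and3P [/andP [ij /forallP ij_max] iG jG]]]].
set X := hist B S w T.
have ipR_good : ipR R X i j = \sum_(t < T) spin R (coin w t i) * spin R (coin w t j).
  by rewrite /ipR big_hist; apply: eq_bigr => t _; rewrite !play_row_good.
case: (lerP A (ipR R X i j)) => [corr|uncorr].
  have pair_le : pair_potential w i j <= potential w.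
    have ji : j != i by rewrite eq_sym.
    rewrite /potential (bigD1 i) //= (bigD1 j ji) /= addrCA -addrA lerDl.
    rewrite !addr_ge0 ?expR_ge0 //; first by apply/sumr_ge0 => *; exact: expR_ge0.
    by apply/sumr_ge0 => k _; apply/sumr_ge0 => *; exact: expR_ge0.
  apply: le_trans pair_le; rewrite -expR0 ler_expR subr_ge0 -mulr_sumr -ipR_good.
  exact: ler_wpM2l.
have all_le k l : k != l -> ipR R X k l <= A.
  move=> kl; have /forallP/(_ l) := ij_max k; rewrite kl /= -(ler_int R) !intr_ip.
  by move=> /le_trans; apply; exact: ltW.
have := sum_bad_sum_sq_le B A0 all_le; rewrite size_hist => bad_le.
rewrite /potential -[1]addr0; apply: lerD (pair_potentials_ge0 w).
rewrite -expR0 ler_expR subr_ge0 -mulr_sumr ler_wpM2l //.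
exact: le_trans (survives_sum_deficit_le R surv) bad_le.
Qed.

Lemma sum_pair_potential_le i j : i != j -> 0 <= lam1 <= 2^-1 ->
  \sum_(w : coins n T) pair_potential w i j <=
  N ^+ T * expR (T%:R * (2 * lam1 ^+ 2) - lam1 * A).
Proof.
move=> ij lam1_bd; rewrite expRD mulrA.
under eq_bigr do rewrite /pair_potential expRD.
rewrite -mulr_suml ler_wpM2r ?expR_ge0 //.
apply: (sum_expR_adapted_le B S (phi := fun _ c => lam1 * (spin R (c i) * spin R (c j)))).
by move=> _; exact: sum_expR_spinM.
Qed.

Lemma sum_deficit_potential_le : 0 <= lam2 ->
  \sum_(w : coins n T) deficit_potential w <=
  N ^+ T * expR (lam2 * (f * (T%:R + f * A)) +
                 T%:R * (- (lam2 * (#|~: B|%:R / 2)) + lam2 ^+ 2 * n%:R ^+ 4)).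
Proof.
move=> lam2_ge0; rewrite expRD mulrCA.
under eq_bigr do rewrite /deficit_potential expRD -sumrN.
rewrite -mulr_sumr ler_wpM2l ?expR_ge0 //.
apply: (sum_expR_adapted_le B S (phi := fun h c => - (lam2 * deficit R B (sig_s S h) c))).
by move=> h; exact: sum_expR_deficit_le.
Qed.

Lemma sum_potential_le (Q : R) : 0 <= lam1 <= 2^-1 -> 0 <= lam2 ->
  T%:R * (2 * lam1 ^+ 2) - lam1 * A <= - Q ->
  lam2 * (f * (T%:R + f * A)) +
    T%:R * (- (lam2 * (#|~: B|%:R / 2)) + lam2 ^+ 2 * n%:R ^+ 4) <= - Q ->
  \sum_(w : coins n T) potential w <= N ^+ T * expR (- Q) * (1 + n%:R ^+ 2).
Proof.
move=> lam1_bd lam2_ge0 pairQ deficitQ.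
have NT0 : 0 <= N ^+ T by rewrite exprn_ge0.
rewrite big_split /= mulrDr mulr1; apply: lerD.
  by apply: le_trans (sum_deficit_potential_le lam2_ge0) _; rewrite ler_wpM2l // ler_expR.
rewrite exchange_big /=; under eq_bigr => i _ do rewrite exchange_big /=.
apply: (le_trans (y := \sum_(i : 'I_n) \sum_(j : 'I_n) N ^+ T * expR (- Q))).
  apply: ler_sum => i _; rewrite [X in _ <= X](bigID (fun j => j != i)) /=.
  apply: ler_wpDr; first by apply/sumr_ge0 => *; rewrite mulr_ge0 ?expR_ge0.
  apply: ler_sum => j ji; rewrite eq_sym in ji.
  by apply: le_trans (sum_pair_potential_le ji lam1_bd) _; rewrite ler_wpM2l // ler_expR.
by rewrite !sumr_const card_ord expr2 -natrM mulr_natr mulrnA.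
Qed.

End Potential.

Theorem lemma2 (R : realType) (c : nat) :
  exists (K : R) (k : nat) (eps0 : R) (n0 : nat),
    0 < K /\ 0 < eps0 /\
    forall (n : nat) (eps : R) (B : {set 'I_n}) (S : strategy n) (T : nat),
      (n0 <= n)%N ->
      0 < eps <= eps0 ->
      (3 + eps) * #|B|%:R = n%:R ->
      K * (n%:R / eps) ^+ 2 * (ln (n%:R / eps)) ^+ k <= T%:R <=
        K * (n%:R / eps) ^+ 2 * (ln (n%:R / eps)) ^+ k + 1 ->
      prob R (bad_event B S (T:=T)) <= (n%:R ^+ c)^-1.
Proof.
exists (1024 * (c + 3)%:R), 1%N, 1, 4%N; split; first by rewrite mulr_gt0 // ltr0n addn3.
split=> // n eps B S T n_ge4 eps_bd size_bad /andP [+ _]; rewrite expr1 => T_ge.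
have nr_ge4 : 4 <= n%:R :> R by rewrite (ler_nat R 4).
have [f_ge1 nr_le4f] := bad_fraction_bounds eps_bd nr_ge4 size_bad.
have size_good : #|~: B|%:R = (2 + eps) * #|B|%:R :> R.
  by move/(congr1 (fun k => k%:R : R)): (cardsC B); rewrite natrD card_ord; lra.
have /andP [eps_gt0 eps_le1] := eps_bd.
have lam1_bd := lam_pair_bounds eps_bd f_ge1.
pose A := corr_threshold eps #|B|%:R T%:R.
pose lam1 := lam_pair eps (#|B|%:R : R).
pose lam2 := lam_deficit eps (#|B|%:R : R) n%:R.
have T_ge0 : 0 <= T%:R :> R := ler0n _ _.
have A_ge0 : 0 <= A by apply: corr_threshold_ge0; lra.
have lam2_ge0 : 0 <= lam2 by apply: lam_deficit_ge0; lra.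
have N_gt0 : 0 < #|{: row n}|%:R :> R by rewrite ltr0n; apply/card_gt0P; exists [ffun => false].
apply: (le_trans (prob_le_mean (potential_ge0 B S lam1 lam2 A) _)).
  by move=> w; apply: bad_event_potential_ge1 => //; case/andP: lam1_bd.
rewrite card_ffun card_ord natrX ler_pdivrMr ?exprn_gt0 //.
apply: (le_trans (sum_potential_le (Q := decay eps n%:R T%:R) S _ _ _ _)) => //.
- by rewrite /lam1 /A pair_exponent_le //; nra.
- by rewrite /lam2 /A deficit_exponent_le //; lra.
rewrite [leRHS]mulrC -mulrA ler_wpM2l ?exprn_ge0 ?(ltW N_gt0) //.
by apply: expRN_ln_le; [lra | apply: decay_ge => //; lra].
Qed.
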